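(* Let $k$ be a field and $Q$ a finitely generated commutative monoid. If $I_\ell\supsetneq\cdots\supsetneq I_0$ is a chain of distinct binomial ideals of $k[Q]$ all inducing the same congruence on $Q$, then $\ell\le1$. Moreover, if $\ell=1$ then $I_1$ contains monomials, $I_0$ contains none, and $I_0=I_1\cap\mathfrak a$ for some augmentation ideal $\mathfrak a$ compatible with $I_1$.
   Context: $k[Q]=\bigoplus_{q\in Q}k\,t^q$ with $t^pt^q=t^{p+q}$. A \emph{binomial ideal} is an ideal generated by elements $t^p-\lambda t^q$ with $\lambda\in k$ ($\lambda=0$ allowed). A binomial ideal $I$ \emph{induces} the congruence $\sim_I$ on $Q$: $p\sim_I q$ iff $t^p-\lambda t^q\in I$ for some $\lambda\in k^*$. An \emph{augmentation ideal compatible with} a binomial ideal $I$ is a proper ideal of the form $\mathfrak a=\langle t^q-\lambda_q: q\in Q\rangle$ with all $\lambda_q\in k^*$ such that $I\cap\mathfrak a$ is a binomial ideal. *)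

From HB Require Import structures.
From mathcomp Require Import all_boot all_order all_algebra.
Set Implicit Arguments. Unset Strict Implicit. Unset Printing Implicit Defensive.
Import GRing.Theory.
Local Open Scope ring_scope.

(* An element of k[Q] is represented by a finite
   formal sum  s : seq (k * Q)  standing for  \sum_(x <- s) x.1 t^(x.2);
   two representations denote the same element iff they have the same
   coefficient function [coef]. *)
Section MonoidAlgebra.
Variables (k : fieldType) (Q : nmodType).

Definition kQ := seq (k * Q).

Definition coef (s : kQ) (q : Q) : k := \sum_(x <- s | x.2 == q) x.1.

Definition kQ_eq (s s' : kQ) : Prop := forall q, coef s q = coef s' q.

Definition kQ_shift (c : k) (a : Q) (s : kQ) : kQ :=
  [seq (c * x.1, a + x.2) | x <- s].

Definition monomial (q : Q) : kQ := [:: (1, q)].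
Definition binom (p q : Q) (lam : k) : kQ := [:: (1, p); (- lam, q)].

(* a subset of k[Q] (given on representations, invariant under kQ_eq) *)
Definition kQset := kQ -> Prop.

Definition is_ideal (I : kQset) : Prop :=
  [/\ forall s s', kQ_eq s s' -> I s -> I s',
      I [::],
      forall s s', I s -> I s' -> I (s ++ s') &
      forall c a s, I s -> I (kQ_shift c a s)].

Definition proper_ideal (I : kQset) : Prop :=
  is_ideal I /\ ~ I (monomial 0).

Definition gen_ideal (G : kQset) : kQset :=
  fun s => forall J : kQset, is_ideal J -> (forall g, G g -> J g) -> J s.

Definition is_binomial (b : kQ) : Prop := exists p q lam, b = binom p q lam.

(* I is generated by binomials t^p - lam t^q (lam = 0 allowed) *)
Definition binomial_ideal (I : kQset) : Prop :=
  exists B : kQset, (forall b, B b -> is_binomial b) /\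
                    (forall s, I s <-> gen_ideal B s).

Definition induced_cong (I : kQset) (p q : Q) : Prop :=
  exists lam : k, lam != 0 /\ I (binom p q lam).

Definition set_cap (I J : kQset) : kQset := fun s => I s /\ J s.

Definition aug_ideal (lam : Q -> k) : kQset :=
  gen_ideal (fun b => exists q, b = binom q 0 (lam q)).

Definition compatible_aug (I a : kQset) : Prop :=
  exists lam : Q -> k, (forall q, lam q != 0) /\
    (forall s, a s <-> aug_ideal lam s) /\
    proper_ideal a /\ binomial_ideal (set_cap I a).

Definition strict_sub (I J : kQset) : Prop :=
  (forall s, I s -> J s) /\ exists s, J s /\ ~ I s.

End MonoidAlgebra.

Definition fin_gen_monoid (Q : nmodType) : Prop :=
  exists gens : seq Q, forall q : Q, exists m : seq nat,
    q = \sum_(i < size gens) nth 0 gens i *+ nth 0%N m i.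

From Pilot Require Import Defs.
From HB Require Import structures.
From mathcomp Require Import all_boot all_order all_algebra.
From mathcomp Require Import ring.
From Stdlib Require Import Classical ClassicalEpsilon.
Import GRing.Theory.
Local Open Scope ring_scope.
Set Implicit Arguments. Unset Strict Implicit. Unset Printing Implicit Defensive.

(* The heart of the argument is a comparison criterion: if J is an ideal
   contained in a binomial ideal I, every congruence relation of I is a
   congruence relation of J, and either J contains a monomial or I contains
   none, then I = J.  (A generator t^p - lam t^q of I is matched by some
   t^p - mu t^q in J; if mu <> lam then t^q lies in I, hence in J.)
   Consequently, in a strict step J < I of the chain, J has no monomial
   while I has one; two consecutive strict steps are then contradictory,
   which gives l <= 1.

   For l = 1, fix a monomial t^r of I1.  Each t^(x+r) is congruent modulo I0
   to a unique nonzero multiple psi(x) t^r, and psi is a character of Q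
   vanishing on the binomials of I0.  Its augmentation ideal
   a = <t^q - psi(q)> is proper (evaluation at psi kills a but not 1),
   contains I0, and every element of I1 is congruent modulo I0 to a multiple
   of t^r; evaluating at psi shows I0 = I1 /\ a. *)

Section BinomialIdeals.
Variables (k : fieldType) (Q : nmodType).
Implicit Types (s : kQ k Q) (I J K B : kQset k Q) (p q x : Q) (c lam mu : k).

Lemma coef_nil q : coef ([::] : kQ k Q) q = 0.
Proof. by rewrite /coef big_nil. Qed.

Lemma coef_cons (y : k * Q) s q :
  coef (y :: s) q = (if y.2 == q then y.1 else 0) + coef s q.
Proof. by rewrite /coef big_cons; case: (y.2 == q); rewrite ?add0r. Qed.

Lemma coef_cat s s' q : coef (s ++ s') q = coef s q + coef s' q.
Proof. by rewrite /coef big_cat. Qed.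

(* Two explicit finite sums denote the same element of k[Q]: compare the
   coefficients of every t^q by cases on which exponents equal q. *)
Local Ltac by_coef := let q := fresh "q" in move=> q;
  rewrite /kQ_shift /= ?add0r ?coef_cat ?coef_cons ?coef_nil /=;
  repeat (match goal with |- context [(?y == q)] => case: (y == q) => /= end);
  ring.

Lemma ideal_eq I s s' : is_ideal I -> kQ_eq s s' -> I s -> I s'.
Proof. by case=> h _ _ _; apply: h. Qed.

Lemma ideal_nil I : is_ideal I -> I [::].
Proof. by case. Qed.

Lemma ideal_cat I s s' : is_ideal I -> I s -> I s' -> I (s ++ s').
Proof. by case=> _ _ h _; apply: h. Qed.

Lemma ideal_shift I c x s : is_ideal I -> I s -> I (kQ_shift c x s).
Proof. by case=> _ _ _ h; apply: h. Qed.

Lemma gen_ideal_is_ideal B : is_ideal (gen_ideal B).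
Proof.
split.
- by move=> s s' e hs J hJ hB; apply: (ideal_eq hJ e (hs J hJ hB)).
- by move=> J hJ _; apply: ideal_nil.
- by move=> s s' hs hs' J hJ hB; apply: (ideal_cat hJ (hs J hJ hB) (hs' J hJ hB)).
- by move=> c x s hs J hJ hB; apply: (ideal_shift c x hJ (hs J hJ hB)).
Qed.

Lemma gen_ideal_gen B b : B b -> gen_ideal B b.
Proof. by move=> hb J _; apply. Qed.

Lemma binomial_ideal_is_ideal I : binomial_ideal I -> is_ideal I.
Proof.
case=> B [_ hIB]; have [h1 h2 h3 h4] := gen_ideal_is_ideal B; split.
- by move=> s s' e /hIB hs; apply/hIB; apply: h1 e hs.
- exact/hIB.
- by move=> s s' /hIB hs /hIB hs'; apply/hIB; apply: h3.
- by move=> c x s /hIB hs; apply/hIB; apply: h4.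
Qed.

Lemma binomial_ideal_ext I J :
  (forall s, I s <-> J s) -> binomial_ideal I -> binomial_ideal J.
Proof. move=> eIJ [B [hB hIB]]; exists B; split=> // s; rewrite -eIJ; exact: hIB. Qed.

Lemma binomial_ideal_sub I J : binomial_ideal I -> is_ideal J ->
  (forall p q lam, I (binom p q lam) -> J (binom p q lam)) ->
  forall s, I s -> J s.
Proof.
move=> [B [hB hIB]] hJ hbin s /hIB; apply=> // b Bb.
have [p [q [lam eb]]] := hB b Bb; rewrite eb in Bb *.
by apply: hbin; apply/hIB; apply: gen_ideal_gen.
Qed.

Section MonomialsInIdeals.
Variable I : kQset k Q.
Hypothesis hI : is_ideal I.

Lemma monomial_of_scaled c x : c != 0 -> I [:: (c, x)] -> I (monomial k x).
Proof.
move=> c0 h; apply: (ideal_eq hI _ (ideal_shift c^-1 0 hI h)).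
rewrite /kQ_shift /= mulVf //; by_coef.
Qed.

Lemma binom0_monomial p q : I (binom p q 0) <-> I (monomial k p).
Proof. by split; apply: ideal_eq hI _; by_coef. Qed.

Lemma binom1_of_monomials x y :
  I (monomial k x) -> I (monomial k y) -> I (binom x y 1).
Proof.
move=> hx hy; apply: (ideal_eq hI _ (ideal_cat hI hx (ideal_shift (-1) 0 hI hy))).
by_coef.
Qed.

(* The difference of t^p - lam t^q and t^p - mu t^q is (mu - lam) t^q. *)
Lemma monomial_of_binoms p q lam mu : lam != mu ->
  I (binom p q lam) -> I (binom p q mu) -> I (monomial k q).
Proof.
move=> ne hl hm; apply: (monomial_of_scaled (c := mu - lam)).
  by rewrite subr_eq0 eq_sym.
apply: (ideal_eq hI _ (ideal_cat hI hl (ideal_shift (-1) 0 hI hm))); by_coef.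
Qed.

Lemma binom_coef_unique p q lam mu : ~ I (monomial k q) ->
  I (binom p q lam) -> I (binom p q mu) -> lam = mu.
Proof.
move=> nq hl hm; apply/eqP; apply/negPn/negP => ne.
exact/nq/(monomial_of_binoms ne hl hm).
Qed.

Lemma binom_of_monomial p q lam mu :
  I (binom p q mu) -> I (monomial k q) -> I (binom p q lam).
Proof.
move=> hm hq; apply: (ideal_eq hI _ (ideal_cat hI hm (ideal_shift (mu - lam) 0 hI hq))).
by_coef.
Qed.

End MonomialsInIdeals.

(* If J <= I have the same binomial relations and J contains some monomial
   t^r, then every monomial t^q of I lies in J: t^q - t^r lies in I, so
   t^q - nu t^r lies in J. *)
Lemma monomial_transfer I J r q : is_ideal I -> is_ideal J ->
  (forall s, J s -> I s) ->
  (forall p q, induced_cong I p q -> induced_cong J p q) ->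
  J (monomial k r) -> I (monomial k q) -> J (monomial k q).
Proof.
move=> hI hJ JI cIJ hr hq.
have [nu [_ hb]] := cIJ _ _ (ex_intro _ 1 (conj (oner_neq0 k)
  (binom1_of_monomials hI hq (JI _ hr)))).
apply: (ideal_eq hJ _ (ideal_cat hJ hb (ideal_shift nu 0 hJ hr))); by_coef.
Qed.

Lemma binomial_sub_criterion I J K : binomial_ideal I -> is_ideal J ->
  (forall s, K s -> I s) -> (forall s, K s -> J s) ->
  (forall p q, induced_cong I p q -> induced_cong K p q) ->
  (forall x, I (monomial k x) -> J (monomial k x)) ->
  forall s, I s -> J s.
Proof.
move=> hbI hJ KI KJ cIK monIJ; have hI := binomial_ideal_is_ideal hbI.
apply: binomial_ideal_sub => // p q lam hb.
have [lam0|lam0] := eqVneq lam 0.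
  rewrite lam0 in hb *; apply/(binom0_monomial hJ); apply: monIJ.
  by move/(binom0_monomial hI): hb.
have [mu [_ hmu]] := cIK p q (ex_intro _ lam (conj lam0 hb)).
have [<-|ne] := eqVneq mu lam; first exact: KJ.
apply: (binom_of_monomial hJ lam (KJ _ hmu)); apply: monIJ.
exact: (monomial_of_binoms hI ne (KI _ hmu) hb).
Qed.

Lemma sub_of_same_cong I J : binomial_ideal I -> is_ideal J ->
  (forall s, J s -> I s) ->
  (forall p q, induced_cong I p q -> induced_cong J p q) ->
  (exists r, J (monomial k r)) \/ (forall q, ~ I (monomial k q)) ->
  forall s, I s -> J s.
Proof.
move=> hbI hJ JI cIJ hmon; apply: (binomial_sub_criterion hbI hJ JI) => // x hx.
case: hmon => [[r hr]|nomon]; last by case: (nomon x).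
exact: (monomial_transfer (binomial_ideal_is_ideal hbI) hJ JI cIJ hr hx).
Qed.

Lemma strict_step_monomials I J : binomial_ideal I -> is_ideal J ->
  strict_sub J I ->
  (forall p q, induced_cong I p q -> induced_cong J p q) ->
  (forall q, ~ J (monomial k q)) /\ (exists r, I (monomial k r)).
Proof.
move=> hbI hJ [JI [s [Is nJs]]] cIJ.
have IJ := sub_of_same_cong hbI hJ JI cIJ.
split=> [q Jq|].
  by apply: nJs; apply: IJ Is; left; exists q.
apply: NNPP => nomon; apply: nJs; apply: IJ Is; right=> q Iq.
by apply: nomon; exists q.
Qed.

Section Evaluation.
Variable psi : Q -> k.

Definition evalQ s : k := \sum_(y <- s) y.1 * psi y.2.

Lemma evalQ_coef s (U : seq Q) : uniq U -> (forall y, y \in s -> y.2 \in U) ->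
  evalQ s = \sum_(q <- U) coef s q * psi q.
Proof.
move=> uU; elim: s => [|y s IH] hs.
  by rewrite /evalQ big_nil big1 // => q _; rewrite coef_nil mul0r.
rewrite /evalQ big_cons -/(evalQ s) IH; last by move=> z hz; apply: hs; rewrite inE hz orbT.
under [in RHS]eq_bigr => q _ do rewrite coef_cons mulrDl.
rewrite big_split /=; congr (_ + _).
rewrite (bigD1_seq y.2) //=; last by apply: hs; rewrite inE eqxx.
by rewrite eqxx big1 ?addr0 // => q /negbTE; rewrite eq_sym => ->; rewrite mul0r.
Qed.

Lemma evalQ_eq s s' : kQ_eq s s' -> evalQ s = evalQ s'.
Proof.
move=> e; set U := undup (map snd (s ++ s')).
have inU y : y \in s ++ s' -> y.2 \in U by move=> hy; rewrite mem_undup map_f.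
have uU : uniq U := undup_uniq _.
rewrite (@evalQ_coef s U uU) => [|y hy]; last by rewrite inU // mem_cat hy.
rewrite (@evalQ_coef s' U uU) => [|y hy]; last by rewrite inU // mem_cat hy orbT.
by apply: eq_bigr => q _; rewrite e.
Qed.

Lemma evalQ_cat s s' : evalQ (s ++ s') = evalQ s + evalQ s'.
Proof. by rewrite /evalQ big_cat. Qed.

Lemma evalQ_binom p q lam : evalQ (binom p q lam) = psi p - lam * psi q.
Proof. by rewrite /evalQ !big_cons big_nil /=; ring. Qed.

Hypotheses (psi0 : psi 0 = 1) (psiD : forall a b, psi (a + b) = psi a * psi b).

Lemma evalQ_kernel_ideal : is_ideal (fun s => evalQ s = 0).
Proof.
split.
- by move=> s s' e h; rewrite -(evalQ_eq e).
- by rewrite /evalQ big_nil.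
- by move=> s s' h h'; rewrite evalQ_cat h h' addr0.
- move=> c a s h; transitivity (c * psi a * evalQ s); last by rewrite h mulr0.
  rewrite /evalQ /kQ_shift big_map big_distrr /=.
  by apply: eq_bigr => y _; rewrite psiD; ring.
Qed.

Lemma aug_ideal_in_kernel s : aug_ideal psi s -> evalQ s = 0.
Proof.
move/(_ (fun t => evalQ t = 0) evalQ_kernel_ideal); apply=> g [q ->].
by rewrite evalQ_binom psi0 mulr1 subrr.
Qed.

Lemma aug_ideal_proper : Defs.proper_ideal (aug_ideal psi).
Proof.
split; first exact: gen_ideal_is_ideal.
move=> /aug_ideal_in_kernel; rewrite /evalQ big_cons big_nil /= psi0 mulr1 addr0.
exact/eqP/oner_neq0.
Qed.

End Evaluation.

Section Augmentation.
Variables (I0 I1 : kQset k Q) (r : Q).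
Hypotheses (bin0 : binomial_ideal I0) (bin1 : binomial_ideal I1)
  (sub01 : forall s, I0 s -> I1 s)
  (cong10 : forall p q, induced_cong I1 p q -> induced_cong I0 p q)
  (nomon0 : forall q, ~ I0 (monomial k q)) (mon1 : I1 (monomial k r)).

Let ideal0 : is_ideal I0 := binomial_ideal_is_ideal bin0.
Let ideal1 : is_ideal I1 := binomial_ideal_is_ideal bin1.

Lemma monomial_binom_r x : I1 (monomial k x) ->
  exists rho, rho != 0 /\ I0 (binom x r rho).
Proof.
move=> hx; apply: cong10; exists 1; split; first exact: oner_neq0.
exact: binom1_of_monomials.
Qed.

Lemma character_exists x : exists rho, rho != 0 /\ I0 (binom (x + r) r rho).
Proof.
apply: monomial_binom_r; apply: (ideal_eq ideal1 _ (ideal_shift 1 x ideal1 mon1)).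
by_coef.
Qed.

Definition character x : k :=
  proj1_sig (constructive_indefinite_description _ (character_exists x)).

Lemma character_spec x : character x != 0 /\ I0 (binom (x + r) r (character x)).
Proof. by rewrite /character; case: constructive_indefinite_description. Qed.

Lemma character_unique x rho : I0 (binom (x + r) r rho) -> character x = rho.
Proof. exact: (binom_coef_unique ideal0 (@nomon0 r) (character_spec x).2). Qed.

Lemma character0 : character 0 = 1.
Proof. by apply: character_unique; apply: (ideal_eq ideal0 _ (ideal_nil ideal0)); by_coef. Qed.

Lemma characterD a b : character (a + b) = character a * character b.
Proof.
rewrite mulrC; apply: character_unique.
apply: (ideal_eq ideal0 _ (ideal_cat ideal0
  (ideal_shift 1 a ideal0 (character_spec b).2)
  (ideal_shift (character b) 0 ideal0 (character_spec a).2))).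
rewrite /kQ_shift /= addrA; by_coef.
Qed.

(* psi vanishes on the binomials of I0: otherwise
   t^r (t^p - lam t^q) would give a nonzero multiple of t^r in I0 *)
Lemma character_binom p q lam :
  I0 (binom p q lam) -> character p = lam * character q.
Proof.
move=> h; apply/eqP; rewrite -subr_eq0; apply/negPn/negP => d0.
apply: (@nomon0 r); apply: (monomial_of_scaled ideal0 d0).
apply: (ideal_eq ideal0 _ (ideal_cat ideal0 (ideal_shift 1 r ideal0 h)
  (ideal_cat ideal0 (ideal_shift (-1) 0 ideal0 (character_spec p).2)
     (ideal_shift lam 0 ideal0 (character_spec q).2)))).
rewrite /kQ_shift /= [r + p]addrC [r + q]addrC; by_coef.
Qed.

Definition augmentation : kQset k Q := aug_ideal character.

Lemma I0_sub_augmentation s : I0 s -> augmentation s.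
Proof.
have ha : is_ideal augmentation := gen_ideal_is_ideal _.
apply: (binomial_ideal_sub bin0 ha) => p q lam /character_binom hp.
have gen x : augmentation (binom x 0 (character x)).
  by apply: gen_ideal_gen; exists x.
apply: (ideal_eq ha _ (ideal_cat ha (gen p) (ideal_shift (-lam) 0 ha (gen q)))).
rewrite hp; by_coef.
Qed.

Definition congr_r s : Prop := exists c, I0 (s ++ [:: (- c, r)]).

Lemma congr_r_ideal : is_ideal congr_r.
Proof.
split.
- move=> s s' e [c hc]; exists c; apply: (ideal_eq ideal0 _ hc).
  by move=> q; rewrite !coef_cat e.
- by exists 0; apply: (ideal_eq ideal0 _ (ideal_nil ideal0)); by_coef.
- move=> s s' [c hc] [c' hc']; exists (c + c').
  by apply: (ideal_eq ideal0 _ (ideal_cat ideal0 hc hc')); by_coef.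
- move=> d x s [c hc]; exists (d * c * character x).
  have := ideal_shift d x ideal0 hc; rewrite /kQ_shift map_cat -/(kQ_shift d x s) => h.
  apply: (ideal_eq ideal0 _ (ideal_cat ideal0 h
    (ideal_shift (d * c) 0 ideal0 (character_spec x).2))).
  by_coef.
Qed.

Lemma I1_sub_congr_r s : I1 s -> congr_r s.
Proof.
apply: (binomial_sub_criterion bin1 congr_r_ideal sub01 _ cong10).
  by move=> t ht; exists 0; apply: (ideal_eq ideal0 _ ht); by_coef.
move=> x /monomial_binom_r [rho [_ hrho]]; exists rho.
by apply: (ideal_eq ideal0 _ hrho); by_coef.
Qed.

(* if s = c t^r modulo I0 and s lies in a, evaluating at psi forces c = 0 *)
Lemma I0_eq_cap s : I0 s <-> I1 s /\ augmentation s.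
Proof.
split=> [h|[h1 ha]]; first by split; [exact: sub01 | exact: I0_sub_augmentation].
have [c hc] := I1_sub_congr_r h1.
have := aug_ideal_in_kernel character0 characterD (I0_sub_augmentation hc).
rewrite evalQ_cat (aug_ideal_in_kernel character0 characterD ha) add0r.
rewrite /evalQ big_cons big_nil /= addr0 => /eqP.
rewrite mulf_eq0 oppr_eq0 (negbTE (character_spec r).1) orbF => /eqP c0.
by apply: (ideal_eq ideal0 _ hc); rewrite c0; by_coef.
Qed.

Lemma augmentation_decomposition : exists a : kQset k Q,
  compatible_aug I1 a /\ forall s, I0 s <-> (I1 s /\ a s).
Proof.
exists augmentation; split; last exact: I0_eq_cap.
exists character; split; first by move=> q; exact: (character_spec q).1.
split=> //; split; first exact: aug_ideal_proper character0 characterD.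
exact: binomial_ideal_ext I0_eq_cap bin0.
Qed.

End Augmentation.

End BinomialIdeals.

Theorem theorem9p12 (k : fieldType) (Q : nmodType) (hQ : fin_gen_monoid Q)
    (l : nat) (I : nat -> kQset k Q)
    (hbin : forall i, (i <= l)%N -> binomial_ideal (I i))
    (hchain : forall i, (i < l)%N -> strict_sub (I i) (I i.+1))
    (hcong : forall i, (i <= l)%N ->
       forall p q : Q, induced_cong (I i) p q <-> induced_cong (I 0%N) p q) :
  (l <= 1)%N /\
  (l = 1%N ->
     (exists q : Q, I 1%N (monomial k q)) /\
     (forall q : Q, ~ I 0%N (monomial k q)) /\
     (exists a : kQset k Q, compatible_aug (I 1%N) a /\
        forall s, I 0%N s <-> (I 1%N s /\ a s))).
Proof.
have cong_step i : (i < l)%N ->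
    forall p q, induced_cong (I i.+1) p q -> induced_cong (I i) p q.
  by move=> hi p q /(hcong _ hi) /(hcong _ (ltnW hi)).
have step i : (i < l)%N ->
    (forall q, ~ I i (monomial k q)) /\ (exists r, I i.+1 (monomial k r)).
  move=> hi; apply: strict_step_monomials (hbin _ hi) _ (hchain _ hi) (cong_step _ hi).
  exact: binomial_ideal_is_ideal (hbin _ (ltnW hi)).
split.
  rewrite leqNgt; apply/negP => hl.
  have [_ [r hr]] := step 0%N (ltnW hl).
  by have [nomon1 _] := step 1%N hl; apply: nomon1 hr.
move=> hl; subst l; have [nomon0 [r mon1]] := step 0%N isT.
split; first by exists r.
split=> //; exact: augmentation_decomposition (hbin 0%N isT) (hbin 1%N isT)
  (fun s => (hchain 0%N isT).1 s) (cong_step 0%N isT) nomon0 mon1.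
Qed.
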